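(* There is an absolute constant $c>0$ such that for every $m\ge2$ there is a parallel-machine scheduling market instance with $m$ machines, $n=O(m\log m)$ jobs, a makespan bound $T$ and a preference profile $\succ$ such that for every $\beta>0$, every schedule $\sigma$ of makespan at most $\beta T$ has rank-approximation factor at least $c\cdot\max\{\log m,\log n\}/\beta$, i.e. there is some $r$ with $\mathrm{rank}_r(\sigma;\succ)\le \beta\,\mathrm{maxrank}_r(\succ)/(c\max\{\log m,\log n\})$.
   Context: Parallel-machine scheduling market: $n$ jobs and $m$ machines; job $j$ has processing time $p_j$ (same on every machine) and a strict total order $\succ_j$ on the machines; there is a makespan bound $T$. A schedule is a partial assignment of jobs to machines; its makespan is the maximum over machines of the total processing time assigned. $\mathrm{rank}_r(\sigma;\succ)$ is the number of jobs assigned by $\sigma$ to one of their top-$r$ machines; $\mathrm{maxrank}_r(\succ)$ is the maximum of $\mathrm{rank}_r$ over schedules with makespan at most $T$. A schedule $\sigma$ has rank-approximation factor $\alpha$ if $\mathrm{rank}_r(\sigma;\succ)\ge\mathrm{maxrank}_r(\succ)/\alpha$ for all $r$. *)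

From HB Require Import structures.
From mathcomp Require Import all_boot all_order all_algebra all_fingroup.
From mathcomp Require Import reals exp.
Set Implicit Arguments. Unset Strict Implicit. Unset Printing Implicit Defensive.
Import Order.TTheory GRing.Theory Num.Theory.
Local Open Scope ring_scope.

(* Jobs are 'I_n, machines are 'I_m.  A schedule is a partial assignment
   of jobs to machines (None = job unassigned). *)
Definition schedule (n m : nat) := {ffun 'I_n -> option 'I_m}.

Definition load (R : realType) (n m : nat) (p : 'I_n -> R)
  (s : schedule n m) (i : 'I_m) : R :=
  \sum_(j | s j == Some i) p j.

(* Makespan = maximum load over machines (0 if there are no machines). *)
Definition makespan (R : realType) (n m : nat) (p : 'I_n -> R)
  (s : schedule n m) : R :=
  \big[Num.max/0]_(i : 'I_m) load p s i.

(* Preferences: the strict total order of job j on machines is given by the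
   permutation pref j, where (pref j) k is job j's (k+1)-th favourite machine. *)
Definition in_top (n m : nat) (pref : 'I_n -> {perm 'I_m}) (r : nat)
  (j : 'I_n) (i : 'I_m) : bool :=
  (((pref j)^-1)%g i < r)%N.

Definition rank (n m : nat) (pref : 'I_n -> {perm 'I_m}) (r : nat)
  (s : schedule n m) : nat :=
  #|[set j | if s j is Some i then in_top pref r j i else false]|.

Definition maxrank (R : realType) (n m : nat) (p : 'I_n -> R) (T : R)
  (pref : 'I_n -> {perm 'I_m}) (r : nat) : nat :=
  \max_(s : schedule n m | makespan p s <= T) rank pref r s.

Definition rank_approx (R : realType) (n m : nat) (p : 'I_n -> R) (T : R)
  (pref : 'I_n -> {perm 'I_m}) (s : schedule n m) (alpha : R) : Prop :=
  forall r : nat, (maxrank p T pref r)%:R / alpha <= (rank pref r s)%:R.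

(* The hard instance has L = l + 1 levels of h^2 jobs each, where h = 2^l
   and m is about h^2.  A job of level k has processing time 2^(l-k), and its
   preference order is the natural order of the machines except that its
   level machine k and one private machine L + d are swapped.  Putting 2^k
   level-k jobs on each private machine has makespan h and gives
   maxrank_(k+1) >= h 2^k, so the weighted sum over r <= l of
   2^(l-r) maxrank_(r+1) is at least L h^2.  For any schedule, a job sitting at position
   q of its own list on machine i contributes less than 2^(L-q) to the
   corresponding weighted sum of ranks, which is at most a weight of machine i
   times its processing time; these machine weights sum to at most 6h.  So an
   alpha-approximate schedule of makespan beta h satisfies
   L h^2 <= alpha 6h beta h, i.e. alpha >= L / (6 beta), and
   L = Theta(log m) = Theta(log n). *)

From HB Require Import structures.
From mathcomp Require Import all_boot all_order all_algebra all_fingroup.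
From mathcomp Require Import reals exp.
From mathcomp Require Import zify ring lra.
Set Implicit Arguments. Unset Strict Implicit. Unset Printing Implicit Defensive.
Import Order.TTheory GRing.Theory Num.Theory.
Local Open Scope ring_scope.

Section RankLoadDuality.
Variables (R : realType) (n m : nat) (p : 'I_n -> R) (T : R).
Variable pref : 'I_n -> {perm 'I_m}.

Lemma load_le_makespan (s : schedule n m) i : load p s i <= makespan p s.
Proof. exact: le_bigmax. Qed.

Lemma makespan_ge0 (s : schedule n m) : 0 <= makespan p s.
Proof. exact: bigmax_ge_id. Qed.

Lemma rank_le_maxrank (s : schedule n m) r :
  makespan p s <= T -> (rank pref r s <= maxrank p T pref r)%N.
Proof. by move=> sT; apply: (leq_bigmax_cond _ sT). Qed.

Lemma rank_approx_maxrank (s : schedule n m) alpha r : 0 < alpha ->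
  rank_approx p T pref s alpha ->
  (maxrank p T pref r)%:R <= alpha * (rank pref r s)%:R.
Proof. by move=> a0 /(_ r); rewrite ler_pdivrMr // mulrC. Qed.

Lemma rank_sumE r (s : schedule n m) :
  (rank pref r s)%:R =
  \sum_j (if s j is Some i then (in_top pref r j i)%:R else 0) :> R.
Proof.
rewrite /rank -sum1_card natr_sum big_mkcond /=; apply: eq_bigr => j _.
by rewrite inE; case: (s j) => [i|] //; case: in_top.
Qed.

Lemma weighted_rank_le_load (N : nat) (w : nat -> R) (phi : 'I_m -> R)
    (s : schedule n m) :
  (forall j i, \sum_(r < N) w r * (in_top pref r.+1 j i)%:R <= phi i * p j) ->
  \sum_(r < N) w r * (rank pref r.+1 s)%:R <= \sum_i phi i * load p s i.
Proof.
move=> per_job.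
under eq_bigr do rewrite rank_sumE mulr_sumr.
under [X in _ <= X]eq_bigr do rewrite /load mulr_sumr big_mkcond.
rewrite exchange_big [X in _ <= X]exchange_big /=; apply: ler_sum => j _.
case: (s j) => [i0|] /=; last by rewrite !big1 // => *; rewrite ?mulr0.
rewrite (bigD1 i0) //= eqxx [X in _ + X]big1 ?addr0 => [|i]; first exact: per_job.
by move=> /negbTE ne; rewrite (inj_eq (@Some_inj _)) eq_sym ne.
Qed.

Lemma weighted_rank_le_makespan (N : nat) (w : nat -> R) (phi : 'I_m -> R)
    (s : schedule n m) :
  (forall i, 0 <= phi i) ->
  (forall j i, \sum_(r < N) w r * (in_top pref r.+1 j i)%:R <= phi i * p j) ->
  \sum_(r < N) w r * (rank pref r.+1 s)%:R <= (\sum_i phi i) * makespan p s.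
Proof.
move=> phi_ge0 /(weighted_rank_le_load s) /le_trans; apply.
rewrite mulr_suml; apply: ler_sum => i _.
by rewrite ler_wpM2l // load_le_makespan.
Qed.
End RankLoadDuality.

Lemma sum_exp2_tail_lt (l q : nat) :
  (\sum_(r < l.+1) 2 ^ (l - r) * (q <= r) < 2 ^ (l.+1 - q))%N.
Proof.
elim: l q => [|l IHl] q.
  by rewrite big_ord1; case: q.
rewrite big_ord_recl.
under eq_bigr do rewrite lift0 subSS.
case: q => [|q].
  by rewrite muln1 subn0 expnS mul2n -addnn ltn_add2l; apply: IHl 0%N.
by rewrite muln0 add0n subSS; under eq_bigr do rewrite ltnS; apply: IHl.
Qed.

Lemma card_ord_ltn (a b : nat) : (a <= b)%N -> #|[set u : 'I_b | (u < a)%N]| = a.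
Proof.
move=> ab; rewrite -sum1_card (eq_bigl (fun u : 'I_b => u < a)%N) => [|u]; last first.
  by rewrite inE.
by rewrite (big_ord_narrow ab) sum1_card card_ord.
Qed.

Section HardInstance.
Variables (R : realType) (l m : nat).
Local Notation L := l.+1.
Local Notation h := (2 ^ l)%N.
Hypothesis machines_enough : (L + h <= m)%N.

(* Job (k, d, u): level k, private machine d, copy u.  Level machines are
   0 .. L-1 and private machines L .. L+h-1. *)
Definition job_label := ('I_L * ('I_h * 'I_h))%type.
Local Notation n := #|{: job_label}|.

Lemma card_job_label : n = (L * (h * h))%N.
Proof. by rewrite !card_prod !card_ord. Qed.

Definition label (j : 'I_n) : job_label := enum_val j.

Lemma card_label_preim (P : pred job_label) :
  #|[set j : 'I_n | P (label j)]| = #|[set x | P x]|.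
Proof.
rewrite -(on_card_preimset (f := label) (onW_bij _ (@enum_val_bij _))).
by apply: eq_card => j; rewrite !inE.
Qed.

Definition level_machine (k : 'I_L) : 'I_m :=
  widen_ord machines_enough (lshift h k).
Definition private_machine (d : 'I_h) : 'I_m :=
  widen_ord machines_enough (rshift L d).

Lemma private_machine_inj : injective private_machine.
Proof. by move=> d d' /(congr1 val) /= /addnI /val_inj. Qed.

Definition ptime (x : job_label) : nat := 2 ^ (l - x.1).
Definition hard_ptime (j : 'I_n) : R := (ptime (label j))%:R.
Definition hard_pref (j : 'I_n) : {perm 'I_m} :=
  tperm (private_machine (label j).2.1) (level_machine (label j).1).

Definition level_assign (k : 'I_L) (x : job_label) : option 'I_m :=
  if (x.1 == k) && (x.2.2 < 2 ^ k)%N then Some (private_machine x.2.1) else None.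
Definition level_schedule (k : 'I_L) : schedule n m :=
  [ffun j => level_assign k (label j)].

Lemma exp_level_le_width (k : 'I_L) : (2 ^ k <= h)%N.
Proof. by rewrite leq_exp2l // -ltnS. Qed.

Lemma ptime_mul_exp_level (k : 'I_L) : (2 ^ (l - k) * 2 ^ k)%N = h.
Proof. by rewrite -expnD subnK // -ltnS. Qed.

Lemma card_level_assign_le (k : 'I_L) i :
  (#|[set x | level_assign k x == Some i]| <= 2 ^ k)%N.
Proof.
rewrite -(@card_in_imset _ _ (fun x : job_label => x.2.2)).
  rewrite -(card_ord_ltn (exp_level_le_width k)); apply: subset_leq_card.
  apply/subsetP => _ /imsetP[x + ->]; rewrite !inE /level_assign.
  by case: ifP => // /andP[].
move=> [k1 [d1 u1]] [k2 [d2 u2]]; rewrite !inE /level_assign /=.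
case: ifP => // /andP[/eqP-> _] /eqP[<-]; case: ifP => // /andP[/eqP-> _].
by move=> /eqP/Some_inj/private_machine_inj-> ->.
Qed.

Lemma level_schedule_load (k : 'I_L) i :
  load hard_ptime (level_schedule k) i <= h%:R.
Proof.
rewrite /load (eq_bigr (fun _ => (2 ^ (l - k))%:R : R)); last first.
  move=> j; rewrite ffunE /level_assign.
  by case: ifP => // /andP[/eqP k_eq _] _; rewrite /hard_ptime /ptime k_eq.
rewrite sumr_const (@eq_card _ _ [set j | level_assign k (label j) == Some i]);
  last by move=> j; rewrite inE unfold_in /level_schedule ffunE.
rewrite (card_label_preim (fun x => level_assign k x == Some i)) -mulrnA ler_nat.
by rewrite -[leqRHS](ptime_mul_exp_level k) leq_mul2l card_level_assign_le orbT.
Qed.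

Lemma level_schedule_rank (k : 'I_L) :
  (h * 2 ^ k <= rank hard_pref k.+1 (level_schedule k))%N.
Proof.
set P := fun x : job_label => (x.1 == k) && (x.2.2 < 2 ^ k)%N.
have -> : (h * 2 ^ k)%N = #|[set j | P (label j)]|.
  rewrite card_label_preim.
  have -> : [set x | P x]
            = setX [set k] (setX [set: 'I_h] [set u : 'I_h | (u < 2 ^ k)%N]).
    by apply/setP => -[k' [d u]]; rewrite !inE.
  by rewrite !cardsX cards1 cardsT card_ord card_ord_ltn ?exp_level_le_width ?mul1n.
apply/subset_leq_card/subsetP => j; rewrite !inE => /andP[/eqP k_eq u_lt].
rewrite /level_schedule ffunE /level_assign k_eq eqxx u_lt /=.
by rewrite /in_top /hard_pref tpermV tpermL /= k_eq.
Qed.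

Lemma maxrank_hard_ge (k : 'I_L) :
  (h * 2 ^ k <= maxrank hard_ptime h%:R hard_pref k.+1)%N.
Proof.
apply: (leq_trans (level_schedule_rank k)); apply: rank_le_maxrank.
by apply: bigmax_le => // i _; exact: level_schedule_load.
Qed.

Definition machine_weight (i : nat) : nat :=
  (if i < L then 2 ^ (L - i) else if i < L + h then 2 else 0)%N.

Lemma exp_position_le (j : 'I_n) (i : 'I_m) :
  (2 ^ (L - (hard_pref j)^-1%g i) <= (machine_weight i * ptime (label j)).+1)%N.
Proof.
have ptime_gt0 : (0 < ptime (label j))%N by rewrite expn_gt0.
rewrite /hard_pref tpermV; case: tpermP => [->|->|_ _] /=.
- rewrite /machine_weight ltnNge leq_addr /= ltn_add2l ltn_ord /ptime.
  have k_le : ((label j).1 <= l)%N by rewrite -ltnS.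
  by rewrite subSn // expnS.
- by rewrite subnDA subnn.
- rewrite /machine_weight; case: (ltnP i L) => [i_lt|i_ge]; last first.
    by rewrite (eqP (i_ge : (L - i == 0)%N)).
  by rewrite ltnW // ltnS leq_pmulr.
Qed.

Lemma weighted_in_top_le (j : 'I_n) (i : 'I_m) :
  (\sum_(r < L) 2 ^ (l - r) * in_top hard_pref r.+1 j i
     <= machine_weight i * ptime (label j))%N.
Proof.
rewrite -ltnS; apply: leq_trans (exp_position_le j i).
exact: sum_exp2_tail_lt.
Qed.

Lemma machine_weight_sum_le : (\sum_(i < m) machine_weight i <= 6 * h)%N.
Proof.
rewrite -(big_mkord xpredT machine_weight).
rewrite (big_cat_nat (leq0n _) machines_enough).
rewrite (big_cat_nat (leq0n _) (leq_addr h L)) /=.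
rewrite [\sum_(L + h <= i < m) _]big_nat_cond.
rewrite [\sum_(L + h <= i < m | _) _]big1 ?addn0; last first.
  move=> i /andP[/andP[i_ge _] _].
  by rewrite /machine_weight ltnNge (leq_trans (leq_addr _ _) i_ge) ltnNge i_ge.
rewrite [\sum_(L <= i < L + h) _](eq_big_nat _ _ (F2 := fun=> 2%N)); last first.
  by move=> i /andP[i_ge i_lt]; rewrite /machine_weight ltnNge i_ge i_lt.
rewrite sum_nat_const_nat addKn.
rewrite (eq_big_nat _ _ (F2 := fun i => 2 * 2 ^ (l - i))%N); last first.
  by move=> i /andP[_ i_lt]; rewrite /machine_weight i_lt -expnS -subSn.
have := sum_exp2_tail_lt l 0.
rewrite subn0 expnS -big_distrr big_mkord /=.
by rewrite (eq_bigr (fun r : 'I_L => 2 ^ (l - r))%N) => [|r _]; [lia | rewrite muln1].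
Qed.

Lemma hard_instance_lower_bound (beta alpha : R) (s : schedule n m) :
  0 < alpha -> makespan hard_ptime s <= beta * h%:R ->
  rank_approx hard_ptime h%:R hard_pref s alpha -> L%:R <= 6 * alpha * beta.
Proof.
move=> alpha_gt0 s_makespan s_approx.
pose w r : R := (2 ^ (l - r))%:R.
have lower :
    (L * (h * h))%:R <= alpha * \sum_(r < L) w r * (rank hard_pref r.+1 s)%:R.
  rewrite mulr_sumr -[in X in X%:R <= _](card_ord L) -sum_nat_const natr_sum.
  apply: ler_sum => r _; rewrite mulrCA.
  have -> : (h * h = 2 ^ (l - r) * (h * 2 ^ r))%N by rewrite mulnCA ptime_mul_exp_level.
  rewrite natrM ler_wpM2l //.
  apply: le_trans (rank_approx_maxrank r.+1 alpha_gt0 s_approx).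
  by rewrite ler_nat maxrank_hard_ge.
have upper : \sum_(r < L) w r * (rank hard_pref r.+1 s)%:R
             <= (6 * h)%:R * (beta * h%:R).
  apply: le_trans (weighted_rank_le_makespan (p := hard_ptime)
                    (phi := fun i => (machine_weight i)%:R) _ _ _) _.
  - by move=> i; rewrite ler0n.
  - move=> j i; rewrite /hard_ptime -natrM /w.
    under eq_bigr do rewrite -natrM.
    by rewrite -natr_sum ler_nat weighted_in_top_le.
  rewrite -natr_sum ler_pM ?makespan_ge0 // ler_nat.
  exact: machine_weight_sum_le.
have hh_gt0 : (0 : R) < (h * h)%:R by rewrite ltr0n muln_gt0 expn_gt0.
rewrite -(ler_pM2r hh_gt0) -natrM; apply: le_trans lower _.
apply: le_trans (ler_wpM2l (ltW alpha_gt0) upper) _.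
rewrite (_ : alpha * _ = 6 * alpha * beta * (h * h)%:R) //.
by rewrite !natrM; ring.
Qed.
End HardInstance.

Lemma exists_scale (m : nat) : (2 <= m)%N ->
  exists l, (2 * (2 ^ l * 2 ^ l) <= m < 8 * (2 ^ l * 2 ^ l))%N.
Proof.
move=> m_ge2; have half_pos : (0 < m./2)%N by rewrite half_gt0.
have /andP[] := trunc_log_bounds (isT : 1 < 4)%N half_pos.
set l := trunc_log 4 m./2; rewrite expnS -[4%N]/(2 * 2)%N expnMn => lo hi.
exists l; have := odd_double_half m; rewrite -muln2; case: (odd m) => /=; lia.
Qed.

Lemma ln_natr_le (R : realType) (a b : nat) :
  (0 < a)%N -> (a <= b)%N -> ln (a%:R : R) <= ln b%:R.
Proof.
move=> a_gt0 ab; rewrite ler_ln ?ler_nat // posrE ltr0n //.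
exact: leq_trans ab.
Qed.

Lemma ln2_gt0 (R : realType) : (0 : R) < ln 2.
Proof. by rewrite ln_gt0 // ltr1n. Qed.

Lemma ln_exp2 (R : realType) (k : nat) : ln ((2 ^ k)%:R : R) = k%:R * ln 2.
Proof. by rewrite natrX lnXn // mulr_natl. Qed.

Section Scale.
Variables (R : realType) (l m : nat).
Local Notation L := l.+1.
Local Notation h := (2 ^ l)%N.

Lemma levels_le_width : (L <= h)%N.
Proof. exact: ltn_expl. Qed.

Lemma scale_machines_enough : (2 * (h * h) <= m)%N -> (L + h <= m)%N.
Proof. have := levels_le_width; have : (0 < h)%N by rewrite expn_gt0. by nia. Qed.

Lemma hard_instance_size :
  (2 * (h * h) <= m)%N -> ((L * (h * h))%:R : R) <= 1 / ln 2 * m%:R * ln m%:R.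
Proof.
move=> m_lo.
have ln_m : L%:R * ln 2 <= ln (m%:R : R).
  by rewrite -ln_exp2 ln_natr_le ?expn_gt0 // expnS; nia.
apply: (@le_trans _ _ (L%:R * m%:R)); first by rewrite -natrM ler_nat leq_mul2l; nia.
by rewrite [X in _ <= X]mulrAC ler_wpM2r // mul1r mulrC ler_pdivlMr ?ln2_gt0.
Qed.

Lemma scaled_ln_max_le : (2 * (h * h) <= m < 8 * (h * h))%N ->
  1 / (18 * ln 2) * Num.max (ln (m%:R : R)) (ln (L * (h * h))%:R) <= L%:R / 6.
Proof.
move=> /andP[m_lo m_hi].
have exp_3L : (2 ^ (3 * L) = 8 * (h * h * h))%N.
  by rewrite [(3 * L)%N]mulnC expnM [(2 ^ L)%N]expnS; ring.
have h_gt0 : (0 < h)%N by rewrite expn_gt0.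
have L_le := levels_le_width.
have max_le : Num.max (ln (m%:R : R)) (ln (L * (h * h))%:R) <= (3 * L)%:R * ln 2.
  by rewrite ge_max -ln_exp2 exp_3L !ln_natr_le //; nia.
have -> : L%:R / 6 = 1 / (18 * ln 2) * ((3 * L)%:R * ln 2) :> R.
  by rewrite natrM; field; rewrite gt_eqF ?ln2_gt0.
by rewrite ler_wpM2l // divr_ge0 // ltW ?mulr_gt0 ?ln2_gt0.
Qed.
End Scale.

Theorem theorem13 (R : realType) :
  exists c : R, 0 < c /\
  exists C : R, 0 < C /\
  forall m : nat, (2 <= m)%N ->
  exists n : nat, (0 < n)%N /\ n%:R <= C * m%:R * ln (m%:R : R) /\
  exists (p : 'I_n -> R) (T : R) (pref : 'I_n -> {perm 'I_m}),
    (forall j, 0 < p j) /\ 0 < T /\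
    forall beta : R, 0 < beta ->
    forall s : schedule n m, makespan p s <= beta * T ->
    forall alpha : R, 0 < alpha ->
      alpha < c * Num.max (ln (m%:R : R)) (ln (n%:R : R)) / beta ->
      ~ rank_approx p T pref s alpha.
Proof.
exists (1 / (18 * ln 2)); split; first by rewrite divr_gt0 // mulr_gt0 ?ln2_gt0.
exists (1 / ln 2); split; first by rewrite divr_gt0 ?ln2_gt0.
move=> m /exists_scale[l m_range]; have /andP[m_lo _] := m_range.
exists #|{: job_label l}|; split; first by rewrite card_job_label !muln_gt0 expn_gt0.
split; first by rewrite card_job_label; exact: hard_instance_size.
have machines_enough := scale_machines_enough m_lo.
exists (@hard_ptime R l), (2 ^ l)%:R, (hard_pref machines_enough).
split; first by move=> j; rewrite ltr0n expn_gt0.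
split; first by rewrite ltr0n expn_gt0.
move=> beta beta_gt0 s s_makespan alpha alpha_gt0 alpha_lt s_approx.
have := hard_instance_lower_bound alpha_gt0 s_makespan s_approx.
move: alpha_lt; rewrite card_job_label ltr_pdivlMr // => /lt_le_trans.
move=> /(_ _ (scaled_ln_max_le R m_range)).
lra.
Qed.
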